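(* Let $p$ be a minimal idempotent in $(\beta\mathbb{N}, +)$, let $\langle C_n \rangle_{n=1}^\infty$ be a sequence of members of $p$, and let $\langle a_n \rangle_{n=1}^\infty$ be a sequence in $\mathbb{N}$. Then for each $n \in \mathbb{N}$ there exists an arithmetic progression $Y_n \subseteq C_n$ of length $a_n$ such that for every nonempty finite $F \subseteq \mathbb{N}$, $\sum_{n \in F} Y_n \subseteq C_{\min F}$.
   Context: $\beta\mathbb{N}$ is the set of ultrafilters on $\mathbb{N}$ with the extension of addition $p+q = \{A \subseteq \mathbb{N} : \{x : -x+A \in q\} \in p\}$, $-x+A=\{y: x+y\in A\}$, a compact right topological semigroup. A minimal idempotent is an idempotent in the smallest two-sided ideal $K(\beta\mathbb{N})$. An arithmetic progression of length $k$ is a set $\{a, a+d, \ldots, a+(k-1)d\}$ with $a,d\in\mathbb{N}$. For finite $F \subseteq \mathbb{N}$ and nonempty sets $Y_n$, $\sum_{n \in F} Y_n = \{\sum_{n \in F} a_n : a_n \in Y_n \text{ for each } n \in F\}$. *)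

From mathcomp Require Import all_boot.
Set Implicit Arguments. Unset Strict Implicit. Unset Printing Implicit Defensive.

Definition nset := nat -> Prop.
Definition nfam := nset -> Prop.

Definition Npos : nset := fun n => 0 < n.

(* U is an ultrafilter on N = {1,2,...}; we represent it as an ultrafilter on
   nat containing Npos (equivalently, an ultrafilter on the subspace Npos). *)
Definition is_ultrafilter (U : nfam) : Prop :=
  [/\ U Npos,
      ~ U (fun _ => False),
      (forall A B : nset, U A -> (forall x, A x -> B x) -> U B),
      (forall A B : nset, U A -> U B -> U (fun x => A x /\ B x)) &
      (forall A : nset, U A \/ U (fun x => ~ A x))].

Definition betaN (p : nfam) : Prop := is_ultrafilter p.

Definition shiftset (x : nat) (A : nset) : nset := fun y => A (x + y).

Definition uadd (p q : nfam) : nfam :=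
  fun A => p (fun x => q (shiftset x A)).

Definition is_ideal (I : nfam -> Prop) : Prop :=
  [/\ (forall p, I p -> betaN p),
      (exists p, I p),
      (forall p q, betaN p -> I q -> I (uadd p q)) &
      (forall p q, I p -> betaN q -> I (uadd p q))].

Definition in_K (p : nfam) : Prop :=
  forall I, is_ideal I -> I p.

Definition idempotent (p : nfam) : Prop := betaN p /\ uadd p p = p.

Definition minimal_idempotent (p : nfam) : Prop := idempotent p /\ in_K p.

Definition is_AP (Y : nset) (k : nat) : Prop :=
  exists b d, 0 < b /\ 0 < d /\ Y = (fun x => exists2 i, i < k & x = b + i * d).

(* sum_{n in F} Y_n for a finite set F given as a duplicate-free list. *)
Definition sumset (Y : nat -> nset) (F : seq nat) : nset :=
  fun x => exists f : nat -> nat,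
      (forall n, n \in F -> Y n (f n)) /\ x = \sum_(n <- F) f n.

Definition minF (F : seq nat) : nat := foldr minn (head 0 F) F.

(* By van der Waerden's theorem (Graham-Rothschild colour focusing),
   AP-richness is partition regular, so the ultrafilters all of whose members
   are AP-rich form a nonempty two-sided ideal of beta N, which contains
   K(beta N).  For an idempotent p and A in p, the set
   A* = {x in A | -x + A in p} lies in p and -x + A* is in p for x in A*.
   Recursively take A_n = B_n* with B_(n+1) the intersection of C_(n+1), A_n
   and the finitely many -y + A_n for y in an AP Y_n inside A_n; then
   Y_n + A_(n+1) lies in A_n, and summing along F in increasing order lands in
   A_(min F), a subset of C_(min F). *)

From Pilot Require Import Defs.
From mathcomp Require Import all_boot zify.
From mathcomp Require Import boolp classical_sets filter.
Set Implicit Arguments. Unset Strict Implicit. Unset Printing Implicit Defensive.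

Definition mono_AP (T : Type) (c : nat -> T) (a d k : nat) :=
  forall i, i < k -> c (a + i * d) = c a.

Definition has_mono_AP (T : Type) (c : nat -> T) (k N : nat) :=
  exists a d, [/\ 0 < d, a + k * d <= N & mono_AP c a d k].

Definition van_der_Waerden (k : nat) :=
  forall T : finType, exists N, forall c : nat -> T, has_mono_AP c k N.

(* [s] progressions of length [k] and distinct colours whose next terms all
   equal the common focus [f]. *)
Definition focused_APs (T : Type) (c : nat -> T) (k s N : nat) :=
  exists f (A D : nat -> nat), f < N /\
    forall j, j < s -> [/\ 0 < D j, A j + k * D j = f, mono_AP c (A j) (D j) k &
      forall j', j' < s -> c (A j') = c (A j) -> j' = j].

Lemma mono_AP_shift (T : Type) (c : nat -> T) n a d k :
  mono_AP (fun x => c (n + x)) a d k -> mono_AP c (n + a) d k.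
Proof. by move=> mono i ik; rewrite -addnA mono. Qed.

Lemma has_mono_AP_shift (T : Type) (c : nat -> T) n k N :
  has_mono_AP (fun x => c (n + x)) k N -> has_mono_AP c k (n + N).
Proof.
case=> a [d [d0 aN mono]]; exists (n + a), d; split=> //; last exact: mono_AP_shift.
by rewrite -addnA leq_add2l.
Qed.

Lemma has_mono_AP_le (T : Type) (c : nat -> T) k N N' :
  N <= N' -> has_mono_AP c k N -> has_mono_AP c k N'.
Proof.
by move=> NN' [a [d [d0 aN mono]]]; exists a, d; split=> //; apply: leq_trans NN'.
Qed.

Lemma focused_APs_le (T : Type) (c : nat -> T) k s N N' :
  N <= N' -> focused_APs c k s N -> focused_APs c k s N'.
Proof.
by move=> NN' [f [A [D [fN fam]]]]; exists f, A, D; split=> //; apply: leq_trans NN'.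
Qed.

Lemma mono_AP_focus (T : Type) (c : nat -> T) a d k :
  mono_AP c a d k -> c (a + k * d) = c a -> mono_AP c a d k.+1.
Proof. by move=> mono ck i; rewrite ltnS leq_eqVlt => /predU1P [->|/mono]. Qed.

Lemma van_der_Waerden_blocks k : van_der_Waerden k ->
  forall (T : finType) (M : nat), exists L, forall c : nat -> T, exists m D,
    [/\ 0 < D, m + k * D <= L &
        forall i o, i < k -> o < M -> c ((m + i * D) * M + o) = c (m * M + o)].
Proof.
move=> vdWk T M; have [L HL] := vdWk {ffun 'I_M -> T}.
exists L => c; pose block x := [ffun o : 'I_M => c (x * M + o)].
have [m [D [D0 mDL mono]]] := HL block.
exists m, D; split=> // i o ik oM.
have := congr1 (fun g : {ffun 'I_M -> T} => g (Ordinal oM)) (mono i ik).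
by rewrite /= !ffunE.
Qed.

Section FocusingStep.

Variables (T : Type) (c : nat -> T) (k M m D : nat).
Hypotheses (k_gt0 : 0 < k) (D_gt0 : 0 < D).
Hypothesis blocks :
  forall i o, i < k -> o < M -> c ((m + i * D) * M + o) = c (m * M + o).

Let c_m x := c (m * M + x).

(* The block progression [m, m + D, ...] lifts every focused family in block
   [m] to one in which the focus of block [m] itself is one more progression. *)
Lemma focused_APs_add_focus s f A D' :
  f < M ->
  (forall j, j < s -> [/\ 0 < D' j, A j + k * D' j = f, mono_AP c_m (A j) (D' j) k &
      forall j', j' < s -> c_m (A j') = c_m (A j) -> j' = j]) ->
  (forall j, j < s -> c_m (A j) <> c_m f) ->
  focused_APs c k s.+1 ((m + k * D).+1 * M).
Proof.
move=> fM fam new.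
exists (m * M + f + k * (M * D)).
exists (fun j => if j < s then m * M + A j else m * M + f).
exists (fun j => if j < s then D' j + M * D else M * D).
split; first by nia.
have lifted x i : i < k -> x < M -> c (m * M + x + i * (M * D)) = c_m x.
  by move=> ik xM; rewrite /c_m -(blocks ik xM); congr c; nia.
move=> j; rewrite ltnS leq_eqVlt => /predU1P [->|js]; rewrite ?ltnn ?js.
- split; [by rewrite muln_gt0 D_gt0 (leq_ltn_trans _ fM) | by [] | |].
  + by move=> i ik; rewrite lifted.
  + move=> j'; rewrite ltnS leq_eqVlt => /predU1P [-> //|j's].
    by rewrite j's => /new.
- have [D'0 Af mono dist] := fam j js.
  split; [by rewrite addn_gt0 D'0 | by nia | |].
  + move=> i ik; have iDf : A j + i * D' j < M by nia.
    by rewrite -[c (m * M + A j)](mono i ik) -(lifted _ i ik iDf); congr c; nia.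
  + move=> j'; rewrite ltnS leq_eqVlt => /predU1P [->|j's].
      by rewrite ltnn => /esym/new.
    by rewrite j's; apply: dist.
Qed.

Lemma focused_APs_step s :
  focused_APs c_m k s M ->
  has_mono_AP c k.+1 ((m + 2) * M) \/ focused_APs c k s.+1 ((m + k * D).+1 * M).
Proof.
case=> f [A [D' [fM fam]]].
have [[j js same]|new] := pselect (exists2 j, j < s & c_m (A j) = c_m f).
  left; have [D'0 Af mono _] := fam j js.
  exists (m * M + A j), (D' j); split => //; first by nia.
  by apply: mono_AP_shift; apply: mono_AP_focus; rewrite // Af.
right; apply: (focused_APs_add_focus fM fam) => j js.
by move=> same; apply: new; exists j.
Qed.

End FocusingStep.

Lemma van_der_Waerden_focusing k : 0 < k -> van_der_Waerden k -> forall (T : finType) s,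
  exists N, forall c : nat -> T, has_mono_AP c k.+1 N \/ focused_APs c k s N.
Proof.
move=> k0 vdWk T; elim=> [|s [M HM]].
  by exists 1 => c; right; exists 0, id, id.
have [L HL] := van_der_Waerden_blocks vdWk T M.
exists ((L + 2) * M) => c; have [m [D [D0 mDL blocks]]] := HL c.
case: (HM (fun x => c (m * M + x))) => [mono|fam].
  left; have := has_mono_AP_shift mono; apply: has_mono_AP_le; nia.
have [mono|fam'] := focused_APs_step k0 D0 blocks fam.
  by left; apply: has_mono_AP_le mono; nia.
by right; apply: focused_APs_le fam'; nia.
Qed.

Lemma focused_APs_card (T : finType) (c : nat -> T) k s N :
  focused_APs c k s N -> s <= #|T|.
Proof.
case=> f [A [D [_ fam]]].
have inj : injective (fun j : 'I_s => c (A j)).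
  move=> j j' same; apply: val_inj.
  have [_ _ _ dist] := fam j' (ltn_ord j').
  exact: dist (ltn_ord j) same.
by rewrite -[s]card_ord; apply: leq_card inj.
Qed.

Lemma van_der_Waerden_succ k : 0 < k -> van_der_Waerden k -> van_der_Waerden k.+1.
Proof.
move=> k0 vdWk T; have [N HN] := van_der_Waerden_focusing k0 vdWk T #|T|.+1.
by exists N => c; case: (HN c) => // /focused_APs_card; rewrite ltnn.
Qed.

Theorem van_der_Waerden_all k : van_der_Waerden k.
Proof.
elim: k => [|[|k] IH] T.
- by exists 0 => c; exists 0, 1.
- by exists 1 => c; exists 0, 1; split=> // i; rewrite ltnS leqn0 => /eqP ->.
- exact: van_der_Waerden_succ.
Qed.

Definition AP_in (A : nset) (k : nat) :=
  exists b d, [/\ 0 < b, 0 < d & forall i, i < k -> A (b + i * d)].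

Definition AP_rich (A : nset) := forall k, AP_in A k.

Lemma AP_in_le (A : nset) k k' : k' <= k -> AP_in A k -> AP_in A k'.
Proof.
move=> kk' [b [d [b0 d0 Ab]]]; exists b, d; split=> // i ik.
by apply: Ab; apply: leq_trans kk'.
Qed.

Lemma AP_rich_sub (A B : nset) : (forall x, A x -> B x) -> AP_rich A -> AP_rich B.
Proof.
move=> AB rA k; have [b [d [b0 d0 Ab]]] := rA k.
by exists b, d; split=> // i /Ab /AB.
Qed.

(* Colour the terms of a long progression in [A \/ B] by membership in [A]. *)
Lemma AP_in_union k : exists N, forall A B : nset,
  AP_in (fun x => A x \/ B x) N -> AP_in A k \/ AP_in B k.
Proof.
have [N HN] := van_der_Waerden_all k bool.
exists N => A B [b [d [b0 d0 AB]]].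
have [a [e [e0 aeN mono]]] := HN (fun i => `[< A (b + i * d) >]).
have term i : b + (a + i * e) * d = b + a * d + i * (e * d) by nia.
have inAB i : i < k -> A (b + (a + i * e) * d) \/ B (b + (a + i * e) * d).
  by move=> ik; apply: AB; nia.
have b_gt0 : 0 < b + a * d by rewrite addn_gt0 b0.
have ed_gt0 : 0 < e * d by rewrite muln_gt0 e0 d0.
case Aa: `[< A (b + a * d) >]; [left|right]; exists (b + a * d), (e * d); split=> //.
- by move=> i /mono; rewrite -term Aa => /asboolP.
- move=> i ik; have := mono i ik; rewrite Aa -term => /asboolP nA.
  by case: (inAB i ik).
Qed.

Lemma AP_rich_union (A B : nset) :
  AP_rich (fun x => A x \/ B x) -> AP_rich A \/ AP_rich B.
Proof.
move=> rAB; apply: contrapT => /not_orP [/existsNP [kA nA] /existsNP [kB nB]].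
have [N HN] := AP_in_union (maxn kA kB).
case: (HN A B (rAB N)) => [Ak|Bk].
- by apply: nA; apply: AP_in_le Ak; rewrite leq_maxl.
- by apply: nB; apply: AP_in_le Bk; rewrite leq_maxr.
Qed.

(* Sets whose complement in N is not AP-rich; partition regularity of
   AP-richness makes this a filter. *)
Definition AP_rich_dual : set_system nat :=
  fun A => ~ AP_rich (fun x => 0 < x /\ ~ A x).

Lemma AP_rich_dual_proper : ProperFilter AP_rich_dual.
Proof.
split.
- by apply=> k; exists 1, 1; split=> // i _; split.
- split.
  + by move=> /(_ 1) [b [d [_ _ /(_ 0 isT) [_ /(_ I)]]]].
  + move=> A B nA nB rAB.
    have splitAB x : 0 < x /\ ~ (A x /\ B x) -> (0 < x /\ ~ A x) \/ (0 < x /\ ~ B x).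
      move=> [x0 nAB]; have [Ax|nAx] := pselect (A x); last by left.
      by right; split=> // Bx; apply: nAB.
    by case: (AP_rich_union (AP_rich_sub splitAB rAB)).
  + move=> P Q PQ nP rQ; apply: nP; apply: AP_rich_sub rQ => x [x0 nQ].
    by split=> // /PQ.
Qed.

Lemma exists_AP_rich_ultrafilter :
  exists U : nfam, betaN U /\ forall A, U A -> AP_rich A.
Proof.
have [U [ultraU dualU]] := ultraFilterLemma AP_rich_dual_proper.
exists U; split.
- split.
  + by apply: dualU => /(_ 1) [b [d [_ _ /(_ 0 isT) [pos /(_ pos)]]]].
  + exact: filter_not_empty.
  + by move=> A B UA AB; apply: filterS UA.
  + by move=> A B; apply: filterI.
  + by move=> A; apply: in_ultra_setVsetC.
- move=> A UA; apply: contrapT => nA.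
  have UnA : U (fun x => ~ A x).
    by apply: dualU; apply: contra_not nA; apply: AP_rich_sub => x [_ /contrapT].
  by apply: (filter_not_empty U); apply: filterS (filterI UA UnA) => x [].
Qed.

Section UltrafilterFacts.

Variable p : nfam.
Hypothesis p_ultra : betaN p.

Lemma betaN_sup (A B : nset) : p A -> (forall x, A x -> B x) -> p B.
Proof. by case: p_ultra => _ _ sup _ _; apply: sup. Qed.

Lemma betaN_meet (A B : nset) : p A -> p B -> p (fun x => A x /\ B x).
Proof. by case: p_ultra => _ _ _ meet _; apply: meet. Qed.

Lemma betaN_nonempty (A : nset) : p A -> exists x, A x.
Proof.
move=> pA; apply: contrapT => /forallNP nA; have [_ p0 _ _ _] := p_ultra.
by apply: p0; apply: (betaN_sup pA) => x /nA.
Qed.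

Lemma betaN_bigmeet (P : nat -> nset) k :
  (forall i, i < k -> p (P i)) -> p (fun y => forall i, i < k -> P i y).
Proof.
elim: k => [|k IH] pP.
  by have [pN _ _ _ _] := p_ultra; refine (betaN_sup pN _).
apply: (betaN_sup (betaN_meet (IH (fun i ik => pP i (ltnW ik))) (pP k (ltnSn k)))).
move=> y [Py Pky] i; rewrite ltnS leq_eqVlt.
by case/predU1P => [->|/Py].
Qed.

End UltrafilterFacts.

Lemma betaN_uadd p q : betaN p -> betaN q -> betaN (uadd p q).
Proof.
move=> [pN p0 psup pmeet pult] [qN q0 qsup qmeet qult]; split.
- apply: (psup _ _ pN) => x _; apply: (qsup _ _ qN) => y y0.
  by rewrite /shiftset /Npos addn_gt0 y0 orbT.
- by move=> p0'; apply: p0; apply: (psup _ _ p0') => x /q0.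
- by move=> A B pA AB; apply: (psup _ _ pA) => x qA; apply: (qsup _ _ qA) => y /AB.
- move=> A B pA pB; apply: (psup _ _ (pmeet _ _ pA pB)) => x [qA qB].
  exact: qmeet.
- move=> A; case: (pult (fun x => q (shiftset x A))) => pA; [by left | right].
  by apply: (psup _ _ pA) => x nqA; case: (qult (shiftset x A)).
Qed.

Definition AP_rich_ultrafilter (q : nfam) := betaN q /\ forall A, q A -> AP_rich A.

(* A member of [p + q] for AP-rich [p] contains [x_i + y] for an AP-rich set of
   [x_i]'s and one common [y] taken from finitely many members of [q]. *)
Lemma AP_rich_ultrafilter_ideal : is_ideal AP_rich_ultrafilter.
Proof.
split.
- by move=> q [].
- by have [U rU] := exists_AP_rich_ultrafilter; exists U.
- move=> p q pU [qU qrich]; split; first exact: betaN_uadd.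
  move=> A pqA k; have [x /qrich /(_ k) [b [d [b0 d0 Ab]]]] := betaN_nonempty pU pqA.
  exists (x + b), d; split=> [||i /Ab]; rewrite ?addn_gt0 ?b0 ?orbT //.
  by rewrite /shiftset addnA.
- move=> p q [pU prich] qU; split; first exact: betaN_uadd.
  move=> A pqA k; have [b [d [b0 d0 Ab]]] := prich _ pqA k.
  have [y Ay] := betaN_nonempty qU (betaN_bigmeet qU Ab).
  exists (b + y), d; split=> [||i /Ay]; rewrite ?addn_gt0 ?b0 //.
  by rewrite /shiftset addnAC.
Qed.

Lemma in_K_AP_rich p : in_K p -> forall A, p A -> AP_rich A.
Proof. by move=> pK; have [] := pK _ AP_rich_ultrafilter_ideal. Qed.

Definition star (p : nfam) (A : nset) : nset := fun x => A x /\ p (shiftset x A).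

Section Star.

Variable p : nfam.
Hypothesis p_idem : Defs.idempotent p.

Lemma star_in (A : nset) : p A -> p (star p A).
Proof.
case: p_idem => p_ultra pp pA.
by apply: betaN_meet => //; rewrite -pp in pA.
Qed.

Lemma star_shift (A : nset) x : star p A x -> p (shiftset x (star p A)).
Proof.
case: (p_idem) => p_ultra _ [_ /star_in pA]; apply: (betaN_sup p_ultra pA).
move=> y [Axy pAxy]; split=> //.
by apply: (betaN_sup p_ultra pAxy) => z; rewrite /shiftset addnA.
Qed.

End Star.

Lemma foldr_minn_le z t x : x \in z :: t -> foldr minn z t <= x.
Proof.
elim: t => [|y t IH] /=; first by rewrite inE => /eqP ->.
have [-> _|xy xin] := eqVneq x y; first exact: geq_minl.
by rewrite geq_min IH ?orbT //; move: xin; rewrite !inE (negbTE xy).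
Qed.

Lemma foldr_minn_mem z t : foldr minn z t \in z :: t.
Proof.
elim: t => [|y t IH] /=; first exact: mem_head.
rewrite /minn; case: ifP => _; first by rewrite !inE eqxx orbT.
by move: IH; rewrite !inE => /orP [->|->]; rewrite ?orbT.
Qed.

Lemma minF_le F x : x \in F -> minF F <= x.
Proof. by case: F => // z t xF; apply: foldr_minn_le; rewrite inE xF orbT. Qed.

Lemma minF_mem F : F != [::] -> minF F \in F.
Proof.
case: F => // z t _; change (foldr minn z (z :: t) \in z :: t).
by have := foldr_minn_mem z (z :: t); rewrite inE => /predU1P [->|//]; apply: mem_head.
Qed.

Lemma minF_sort F : F != [::] -> minF F = head 0 (sort leq F).
Proof.
move=> F0; have := mem_sort leq F; have := sort_sorted leq_total F.
case: (sort leq F) => [_ /(_ (minF F))|z t /= sF memF].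
  by rewrite in_nil minF_mem.
apply/eqP; rewrite eqn_leq minF_le -?memF ?mem_head //=.
have := minF_mem F0; rewrite -memF inE => /predU1P [-> //|].
exact: (allP (order_path_min leq_trans sF)).
Qed.

Section SumsAlongChain.

Variables (A Y : nat -> nset).
Hypotheses (A_succ_sub : forall n x, A n.+1 x -> A n x)
  (Y_sub : forall n y, Y n y -> A n y)
  (Y_add : forall n x y, Y n y -> A n.+1 x -> A n (y + x)).

Lemma chain_sub m n x : m <= n -> A n x -> A m x.
Proof.
elim: n => [|n IH]; first by rewrite leqn0 => /eqP ->.
by rewrite leq_eqVlt => /predU1P [-> //|mn /A_succ_sub]; apply: IH.
Qed.

Lemma sum_sorted_in_chain F f : sorted ltn F -> F != [::] ->
  (forall n, n \in F -> Y n (f n)) -> A (head 0 F) (\sum_(n <- F) f n).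
Proof.
elim: F => [//|n F IH] sF _ Yf; rewrite big_cons.
case: F IH sF Yf => [_ _ Yf|m F IH /= /andP [nm sF] Yf].
  by rewrite big_nil addn0; apply/Y_sub/Yf/mem_head.
apply/Y_add/(chain_sub nm); first exact/Yf/mem_head.
by apply: IH => // k kF; apply: Yf; rewrite inE kF orbT.
Qed.

Lemma sumset_in_chain F : F != [::] -> uniq F ->
  forall x, sumset Y F x -> A (minF F) x.
Proof.
move=> F0 uF x [f [Yf ->]].
rewrite minF_sort // -(perm_big _ (permEl (perm_sort leq F))).
apply: sum_sorted_in_chain => [||n]; last by rewrite mem_sort; apply: Yf.
- by rewrite ltn_sorted_uniq_leq sort_uniq uF sort_sorted //; apply: leq_total.
- by apply: contraNneq F0 => /(congr1 size); rewrite size_sort => /eqP; rewrite size_eq0.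
Qed.

End SumsAlongChain.

Lemma exists_AP_choice (A : nset) k :
  exists Y : nset, AP_in A k -> is_AP Y k /\ (forall x, Y x -> A x).
Proof.
have [[b [d [b0 d0 Ab]]]|nA] := pselect (AP_in A k); last by exists A => /nA.
exists (fun x => exists2 i, i < k & x = b + i * d) => _.
by split=> [|x [i ik ->]]; [exists b, d | apply: Ab].
Qed.

Definition AP_choice (A : nset) (k : nat) : nset :=
  proj1_sig (cid (exists_AP_choice A k)).

Lemma AP_choiceP (A : nset) k :
  AP_in A k -> is_AP (AP_choice A k) k /\ (forall x, AP_choice A k x -> A x).
Proof. exact: proj2_sig (cid (exists_AP_choice A k)). Qed.

Section Chain.

Variables (p : nfam) (C : nat -> nset) (a : nat -> nat).
Hypotheses (p_idem : Defs.idempotent p) (p_rich : forall A, p A -> AP_rich A)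
  (pC : forall n, 0 < n -> p (C n)).

Fixpoint star_chain (n : nat) : nset :=
  if n is m.+1 then
    star p (fun x => C m.+1 x /\ star_chain m x /\
      forall y, AP_choice (star_chain m) (a m) y -> star_chain m (y + x))
  else star p Npos.

Let p_ultra : betaN p. Proof. by case: p_idem. Qed.

Lemma star_chain_shift n x : star_chain n x -> p (shiftset x (star_chain n)).
Proof. by case: n => [|n]; apply: star_shift. Qed.

Lemma star_chain_in n : p (star_chain n).
Proof.
elim: n => [|n IH] /=; apply: star_in => //; first by case: p_ultra.
apply: betaN_meet => //; first exact: pC.
apply: betaN_meet => //.
have [[b [d [_ [_ ->]]]] Ysub] := AP_choiceP (p_rich IH (a n)).
have shifts : p (fun x => forall i, i < a n -> shiftset (b + i * d) (star_chain n) x).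
  by apply: betaN_bigmeet => // i ik; apply/star_chain_shift/Ysub; exists i.
by apply: (betaN_sup p_ultra shifts) => x Yx y [i ik ->]; apply: Yx.
Qed.

Lemma star_chain_AP n :
  is_AP (AP_choice (star_chain n) (a n)) (a n) /\
  (forall x, AP_choice (star_chain n) (a n) x -> star_chain n x).
Proof. exact/AP_choiceP/p_rich/star_chain_in. Qed.

Lemma star_chain_succ_sub n x : star_chain n.+1 x -> star_chain n x.
Proof. by case=> [[_ []]]. Qed.

Lemma star_chain_add_AP n x y :
  AP_choice (star_chain n) (a n) y -> star_chain n.+1 x -> star_chain n (y + x).
Proof. by move=> Yy [[_ [_ add]] _]; apply: add. Qed.

Lemma star_chain_sub_C n x : 0 < n -> star_chain n x -> C n x.
Proof. by case: n => // n _ [[]]. Qed.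

End Chain.

Theorem theorem2p3 (p : nfam) (C : nat -> nset) (a : nat -> nat) :
  minimal_idempotent p ->
  (forall n, 0 < n -> p (C n)) ->
  (forall n, 0 < n -> 0 < a n) ->
  exists Y : nat -> nset,
    (forall n, 0 < n -> is_AP (Y n) (a n) /\ (forall x, Y n x -> C n x)) /\
    (forall F : seq nat, F != [::] -> uniq F -> all (fun n => 0 < n) F ->
       forall x, sumset Y F x -> C (minF F) x).
Proof.
move=> [p_idem /in_K_AP_rich p_rich] pC _.
pose Y n := AP_choice (star_chain p C a n) (a n).
have Y_AP := star_chain_AP a p_idem p_rich pC.
exists Y; split=> [n n0|F F0 uF Fpos x].
- by have [Y_is_AP Y_sub] := Y_AP n; split=> // x /Y_sub; apply: star_chain_sub_C.
- have Y_sub n y : Y n y -> star_chain p C a n y by case: (Y_AP n) => _; apply.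
  have in_chain := sumset_in_chain (@star_chain_succ_sub p C a) Y_sub
    (@star_chain_add_AP p C a) F0 uF.
  move=> /in_chain; apply: star_chain_sub_C.
  exact: (allP Fpos) _ (minF_mem F0).
Qed.
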